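(* The functionally independent Casimir invariants of the Lie algebra $\mathfrak{g}_{n}$ are the linear central elements $z_{i,j}$ ($1\leq i\leq j\leq n-2$) and the $n$th degree polynomial $C_{n}=-\det(M_n)$, where $M_n$ is the $n\times n$ symmetric matrix with coefficients in $\mathfrak{g}_n$ \begin{equation*} M_n:=\begin{pmatrix} z_{1,1} & \cdots & z_{1,n-2} & -y_{1,-} & y_{1,+} \\ \vdots & \ddots & \vdots & \vdots & \vdots \\ z_{1,n-2} & \cdots & z_{n-2,n-2} & -y_{n-2,-} & y_{n-2,+} \\ -y_{1,-} & \cdots & -y_{n-2,-} & -2x_{-} & h \\ y_{1,+} & \cdots & y_{n-2,+} & h & 2x_{+} \end{pmatrix}. \end{equation*}
   Context: For $n\geq 2$, $\mathfrak{g}_n$ is the $n(n+1)/2$-dimensional Lie algebra over $\mathbb{K}$ ($\mathbb{R}$ or $\mathbb{C}$) with basis $h,x_-,x_+$, $y_{i,\pm}$ ($i=1,\dots,n-2$), $z_{i,j}$ ($1\le i\le j\le n-2$), and commutation relations $[x_+,x_-]=h$, $[h,x_\pm]=\pm 2x_\pm$, $[h,y_{i,\pm}]=\pm y_{i,\pm}$, $[x_-,y_{i,-}]=[x_+,y_{i,+}]=0$, $[x_-,y_{i,+}]=y_{i,-}$, $[x_+,y_{i,-}]=y_{i,+}$, $[y_{i,+},y_{j,+}]=[y_{i,-},y_{j,-}]=0$, $[y_{i,+},y_{j,-}]=z_{\min(i,j),\max(i,j)}$, and the $z_{i,j}$ are central. A (polynomial) Casimir element is an element $C$ of the symmetric algebra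 $S\mathfrak{g}_n\cong\mathbb{K}[h,x_-,x_+,\dots,z_{n-2,n-2}]$ (with the Lie–Poisson bracket induced by the Lie bracket) annihilated by the adjoint action of $\mathfrak{g}_n$ extended by derivations, i.e. $\{C,x\}=0$ for all $x\in\mathfrak{g}_n$. It was shown earlier (via the Beltrametti–Blasi formula) that $\mathfrak{g}_n$ has exactly $n(n-1)/2\cdot$—more precisely $(n-1)(n-2)/2+1$—functionally independent Casimir invariants, of which $(n-1)(n-2)/2$ are the central elements $z_{i,j}$. *)

From HB Require Import structures.
From mathcomp Require Import all_boot all_order all_algebra.
From mathcomp Require Import mpoly.

Set Implicit Arguments.
Unset Strict Implicit.
Unset Printing Implicit Defensive.

Import Order.TTheory GRing.Theory Num.Theory.
Local Open Scope ring_scope.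

(* Throughout, m stands for n - 2. *)

(* index set of the central elements z_{i,j}, 1 <= i <= j <= m
   (0-based here: i <= j in 'I_m) *)
Definition zidx (m : nat) := {p : 'I_m * 'I_m | (p.1 <= p.2)%N}.

Inductive gb (m : nat) : Type :=
  | Gh | Gxm | Gxp | Gym of 'I_m | Gyp of 'I_m | Gz of zidx m.
Arguments Gh {m}. Arguments Gxm {m}. Arguments Gxp {m}.

Definition gb_enc m (b : gb m) : (unit + unit + unit) + ('I_m + 'I_m) + zidx m :=
  match b with
  | Gh => inl (inl (inl (inl tt)))
  | Gxm => inl (inl (inl (inr tt)))
  | Gxp => inl (inl (inr tt))
  | Gym i => inl (inr (inl i))
  | Gyp i => inl (inr (inr i))
  | Gz z => inr z
  end.
Definition gb_dec m (s : (unit + unit + unit) + ('I_m + 'I_m) + zidx m) : gb m :=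
  match s with
  | inl (inl (inl (inl _))) => Gh
  | inl (inl (inl (inr _))) => Gxm
  | inl (inl (inr _)) => Gxp
  | inl (inr (inl i)) => Gym i
  | inl (inr (inr i)) => Gyp i
  | inr z => Gz z
  end.
Lemma gb_encK m : cancel (@gb_enc m) (@gb_dec m).
Proof. by case. Qed.
HB.instance Definition _ m := Finite.copy (gb m) (can_type (@gb_encK m)).

(* dimension of g_n (= n(n+1)/2) and the symmetric algebra S(g_n) *)
Definition gdim (m : nat) := #|{: gb m}|.
Definition Sg (K : numFieldType) (m : nat) := {mpoly K[gdim m]}.

Definition X (K : numFieldType) m (b : gb m) : Sg K m := 'X_(enum_rank b).

Lemma zof_subproof m (i j : 'I_m) :
  ((if (i <= j)%N then (i, j) else (j, i)).1 <= (if (i <= j)%N then (i, j) else (j, i)).2)%N.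
Proof. by case: ifP => //= /negbT; rewrite -ltnNge => /ltnW. Qed.
Definition zof m (i j : 'I_m) : zidx m :=
  exist _ (if (i <= j)%N then (i, j) else (j, i)) (zof_subproof i j).

Definition br (K : numFieldType) m (a b : gb m) : Sg K m :=
  match a, b with
  | Gxp, Gxm => X K Gh
  | Gxm, Gxp => - X K Gh
  | Gh, Gxp => 2%:R * X K Gxp
  | Gxp, Gh => - (2%:R * X K Gxp)
  | Gh, Gxm => - (2%:R * X K Gxm)
  | Gxm, Gh => 2%:R * X K Gxm
  | Gh, Gyp i => X K (Gyp i)
  | Gyp i, Gh => - X K (Gyp i)
  | Gh, Gym i => - X K (Gym i)
  | Gym i, Gh => X K (Gym i)
  | Gxm, Gyp i => X K (Gym i)
  | Gyp i, Gxm => - X K (Gym i)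
  | Gxp, Gym i => X K (Gyp i)
  | Gym i, Gxp => - X K (Gyp i)
  | Gyp i, Gym j => X K (Gz (zof i j))
  | Gym j, Gyp i => - X K (Gz (zof i j))
  | _, _ => 0
  end.

Definition pbr (K : numFieldType) m (f g : Sg K m) : Sg K m :=
  \sum_(a : gb m) \sum_(b : gb m)
     (mderiv (enum_rank a) f * mderiv (enum_rank b) g * br K a b).

Definition casimir (K : numFieldType) m (C : Sg K m) : Prop :=
  forall x : gb m, pbr C (X K x) = 0.

Definition jacobian (K : numFieldType) m (I : finType) (F : I -> Sg K m)
    (v : 'I_(gdim m) -> K) : 'M[K]_(#|I|, gdim m) :=
  \matrix_(i < #|I|, j < gdim m) (mderiv j (F (enum_val i))).@[v].

(* functional independence: the Jacobian has full rank #|I| (at some point,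
   equivalently on a Zariski-dense open set) *)
Definition func_indep (K : numFieldType) m (I : finType) (F : I -> Sg K m) : Prop :=
  exists v : 'I_(gdim m) -> K, row_free (jacobian F v).

Definition Mmat (K : numFieldType) m : 'M[Sg K m]_(m + 2) :=
  \matrix_(i, j)
    match split i, split j with
    | inl a, inl b => X K (Gz (zof a b))
    | inl a, inr t => if val t == 0%N then - X K (Gym a) else X K (Gyp a)
    | inr s, inl b => if val s == 0%N then - X K (Gym b) else X K (Gyp b)
    | inr s, inr t =>
        if (val s == 0%N) && (val t == 0%N) then - (2%:R * X K Gxm)
        else if (val s == 1%N) && (val t == 1%N) then 2%:R * X K Gxp
        else X K Gh
    end.

Definition Cn (K : numFieldType) m : Sg K m := - \det (Mmat K m).

Definition casimir_family (K : numFieldType) m (o : option (zidx m)) : Sg K m :=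
  match o with None => Cn K m | Some z => X K (Gz z) end.

Definition extend_family (K : numFieldType) m (C : Sg K m)
    (o : option (option (zidx m))) : Sg K m :=
  match o with None => C | Some o' => @casimir_family K m o' end.

From HB Require Import structures.
From mathcomp Require Import all_boot all_order all_algebra.
From mathcomp Require Import mpoly.
From mathcomp Require Import perm ring zify.

Set Implicit Arguments.
Unset Strict Implicit.
Unset Printing Implicit Defensive.

Import Order.TTheory GRing.Theory Num.Theory.
Local Open Scope ring_scope.

(* For x in g_n the derivation {-, x} acts on the entries of M_n as
   M |-> A_x M + M A_x^T for an explicit traceless matrix A_x, so
   {det M_n, x} = 2 tr(A_x) det M_n = 0.  At a point where M_n specialises to
   the identity, dC_n = -tr(dM_n) has x_+ component -2 while no dz_{i,j} has
   one: C_n is independent of the z_{i,j}.  Conversely the Jacobian J of any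
   family of Casimirs satisfies J P = 0, P the matrix of the Lie-Poisson
   bracket.  At the point h = z_{i,i} = 1 the bracket pairs x_- with x_+ and
   y_{i,-} with y_{i,+}, so P has rank at least 2n - 2 over the fraction
   field, and Sylvester's inequality bounds the rank of J by
   dim g_n - (2n - 2) = (n-1)(n-2)/2 + 1. *)

Lemma mxtrace_mul_adj (R : comPzRingType) n (B M : 'M[R]_n) :
  \tr (B *m \adj M) = \sum_i \sum_j B i j * cofactor M i j.
Proof.
by apply: eq_bigr => i _; rewrite mxE; apply: eq_bigr => j _; rewrite mxE.
Qed.

Section Derivation.
Variables (R : comPzRingType) (D : R -> R).
Hypothesis Dadd : {morph D : x y / x + y}.
Hypothesis Dmul : forall x y, D (x * y) = D x * y + x * D y.

Lemma derivation0 : D 0 = 0.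
Proof. by apply: (addrI (D 0)); rewrite -Dadd !addr0. Qed.

Lemma derivationN x : D (- x) = - D x.
Proof. by apply: (addrI (D x)); rewrite -Dadd !subrr derivation0. Qed.

Lemma derivation1 : D 1 = 0.
Proof.
have := Dmul 1 1; rewrite !mulr1 mul1r => D1.
by apply: (addrI (D 1)); rewrite addr0 -D1.
Qed.

Lemma derivation_nat k : D k%:R = 0.
Proof. by elim: k => [|k IH]; rewrite ?derivation0 // mulrS Dadd IH derivation1 addr0. Qed.

Lemma derivation_sign k : D ((-1) ^+ k) = 0.
Proof.
elim: k => [|k IH]; first by rewrite expr0 derivation1.
by rewrite exprS Dmul IH derivationN derivation1 oppr0 mul0r mulr0 addr0.
Qed.

Lemma derivation_prod (I : eqType) (r : seq I) (F : I -> R) : uniq r ->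
  D (\prod_(i <- r) F i) = \sum_(i <- r) D (F i) * \prod_(k <- r | k != i) F k.
Proof.
elim: r => [|a r IH] /=; first by rewrite !big_nil derivation1.
case/andP=> ar ur; rewrite !big_cons Dmul IH // eqxx /= big_distrr.
congr (_ * _ + _).
  rewrite -[RHS]big_filter (_ : [seq k <- r | k != a] = r) //.
  by apply/all_filterP/allP => k kr; apply: contraNneq ar => <-.
rewrite !big_seq; apply: eq_bigr => i ir; rewrite big_cons /=.
by case: eqP ar => [->|_ _]; rewrite ?ir //= mulrCA.
Qed.

Lemma derivation_det n (A : 'M[R]_n) :
  D (\det A) = \sum_i \sum_j D (A i j) * cofactor A i j.
Proof.
rewrite /determinant (big_morph D Dadd derivation0).
under eq_bigr => s _ do rewrite Dmul derivation_sign mul0r add0r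
  (derivation_prod _ (index_enum_uniq _)) big_distrr.
rewrite exchange_big /=; apply: eq_bigr => i _.
under [RHS]eq_bigr => j _ do rewrite expand_cofactor big_distrr.
rewrite (exchange_big_dep predT) //=; apply: eq_bigr => s _.
rewrite [RHS](big_pred1 (s i)) => [|j]; last by rewrite /= eq_sym.
by rewrite mulrCA; congr (_ * (_ * _)); apply: eq_bigl => k; rewrite eq_sym.
Qed.

(* Infinitesimal form of det (G M G^T) = det G ^+ 2 * det M. *)
Lemma derivation_det_congruence n (A M : 'M[R]_n) :
  (forall i j, D (M i j) = (A *m M + M *m A^T) i j) ->
  D (\det M) = \det M * \tr A *+ 2.
Proof.
move=> dM; rewrite derivation_det.
under eq_bigr => i _ do under eq_bigr => j _ do rewrite dM.
rewrite -mxtrace_mul_adj mulmxDl mxtraceD -mulmxA mul_mx_adj mul_mx_scalar.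
rewrite [X in _ + X]mxtrace_mulC mulmxA mul_adj_mx mul_scalar_mx.
by rewrite !mxtraceZ mxtrace_tr mulr2n.
Qed.

End Derivation.

Lemma mderivXU (R : comNzRingType) k (i j : 'I_k) :
  mderiv j ('X_i : {mpoly R[k]}) = (i == j)%:R.
Proof.
rewrite mderivX mnm1E; case: eqP => [->|_]; last by rewrite scale0r.
by rewrite scale1r -{1}(add0m U_(j)%MM) addmK mpolyX0.
Qed.

Lemma split_lshift m n (i : 'I_m) : split (lshift n i) = inl i.
Proof. exact: (unsplitK (inl i)). Qed.

Lemma split_rshift m n (i : 'I_n) : split (rshift m i) = inr i.
Proof. exact: (unsplitK (inr i)). Qed.

Lemma mul_delta_mxE (R : pzSemiRingType) n (p q : 'I_n) (M : 'M[R]_n) i j :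
  (delta_mx p q *m M) i j = (i == p)%:R * M q j.
Proof.
rewrite mxE (bigD1 q) //= mxE eqxx andbT big1 ?addr0 // => k /negbTE kq.
by rewrite mxE kq andbF mul0r.
Qed.

Lemma mul_mx_deltaE (R : pzSemiRingType) n (p q : 'I_n) (M : 'M[R]_n) i j :
  (M *m delta_mx p q) i j = M i p * (j == q)%:R.
Proof.
rewrite mxE (bigD1 p) //= mxE eqxx big1 ?addr0 // => k /negbTE kp.
by rewrite mxE kp mulr0.
Qed.

Lemma zofC m (i j : 'I_m) : zof i j = zof j i.
Proof. by apply: val_inj => /=; case: (ltngtP i j) => [||/val_inj ->]. Qed.

Section PoissonDerivation.
Variables (K : numFieldType) (m : nat).
Local Notation S := (Sg K m).
Implicit Types (f g : S) (x b : gb m).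

Definition ham x f : S := \sum_(a : gb m) mderiv (enum_rank a) f * br K a x.

Lemma hamD x : {morph ham x : f g / f + g}.
Proof.
by move=> f g; rewrite -big_split; apply: eq_bigr => a _; rewrite mderivD mulrDl.
Qed.

Lemma hamM x f g : ham x (f * g) = ham x f * g + f * ham x g.
Proof.
rewrite /ham big_distrl big_distrr -big_split.
by apply: eq_bigr => a _ /=; rewrite mderivM; ring.
Qed.

Lemma ham_X x b : ham x (X K b) = br K b x.
Proof.
rewrite /ham (bigD1 b) //= big1 => [|a ab]; rewrite /X mderivXU.
  by rewrite eqxx mul1r addr0.
by rewrite (inj_eq enum_rank_inj) eq_sym (negbTE ab) mul0r.
Qed.

Lemma pbrX f x : pbr f (X K x) = ham x f.
Proof.
apply: eq_bigr => a _; rewrite (bigD1 x) //= big1 => [|b bx]; rewrite /X mderivXU.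
  by rewrite eqxx mulr1 addr0.
by rewrite (inj_eq enum_rank_inj) eq_sym (negbTE bx) mulr0 mul0r.
Qed.

Lemma casimir_z (z : zidx m) : casimir (X K (Gz z)).
Proof. by case=> *; rewrite pbrX ham_X. Qed.

Definition row_xm : 'I_(m + 2) := rshift m (@ord0 1).
Definition row_xp : 'I_(m + 2) := rshift m (@ord_max 1).

Lemma Mmat_indexP (P : 'I_(m + 2) -> Prop) :
  (forall a, P (lshift 2 a)) -> P row_xm -> P row_xp -> forall i, P i.
Proof.
move=> Py Pm Pp i; rewrite -(splitK i); case: (split i) => [a|[[|[|s]] s2]] //=.
- by rewrite (_ : Ordinal s2 = ord0) //; apply: val_inj.
- by rewrite (_ : Ordinal s2 = ord_max) //; apply: val_inj.
Qed.

Definition act_mx x : 'M[S]_(m + 2) :=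
  match x with
  | Gh => delta_mx row_xm row_xm - delta_mx row_xp row_xp
  | Gxm => delta_mx row_xp row_xm
  | Gxp => delta_mx row_xm row_xp
  | Gym k => delta_mx row_xp (lshift 2 k)
  | Gyp k => delta_mx row_xm (lshift 2 k)
  | Gz _ => 0
  end.

Lemma mxtrace_act_mx x : \tr (act_mx x) = 0.
Proof.
have trd (p q : 'I_(m + 2)) : \tr (delta_mx p q : 'M[S]_(m + 2)) = (p == q)%:R.
  rewrite /mxtrace (bigD1 p) //= mxE eqxx big1 ?addr0 // => i /negbTE ip.
  by rewrite mxE ip.
case: x => [||| k | k | z] /=; rewrite ?raddfB /= ?trd ?mxtrace0 ?subrr //.
all: by rewrite ?eq_rshift ?eq_rlshift ?eqxx ?subrr.
Qed.

Lemma ham_Mmat x i j :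
  ham x (Mmat K m i j) = (act_mx x *m Mmat K m + Mmat K m *m (act_mx x)^T) i j.
Proof.
have ham2 y f : ham y (2%:R * f) = 2%:R * ham y f.
  by rewrite hamM (derivation_nat (hamD y) (hamM y)) mul0r add0r.
have mxDE (A B : 'M[S]_(m + 2)) k l : (A + B) k l = A k l + B k l by rewrite mxE.
have mxNE (A : 'M[S]_(m + 2)) k l : (- A) k l = - A k l by rewrite mxE.
(* Both sides are hidden while rewriting the matrix products: unifying with
   the unfolded definition of M_n is very slow. *)
have [M eM] : {M | Mmat K m = M} by exists (Mmat K m).
have [hx ehx] : {hx | ham x (Mmat K m i j) = hx} by exists (ham x (Mmat K m i j)).
rewrite ehx [in RHS]eM mxDE; case: x ehx => [||| k | k | z] /= <-;
  rewrite ?(mulmxBl, linearB, mulmxBr, mul0mx, trmx0, mulmx0) /= ?trmx_delta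
    ?mxDE ?mxNE ?mul_delta_mxE ?mul_mx_deltaE -?eM.
all: move: i j; apply: Mmat_indexP => [a||]; apply: Mmat_indexP => [b||].
all: rewrite /row_xm /row_xp ?eq_lshift ?eq_rshift ?eq_lrshift ?eq_rlshift /=.
all: rewrite ?mxE ?split_lshift ?split_rshift /=.
all: rewrite ?(derivationN (hamD _), ham2, ham_X) /=.
all: try ring.
all: by rewrite zofC; ring.
Qed.

Lemma casimir_Cn : casimir (Cn K m).
Proof.
move=> x; rewrite pbrX /Cn (derivationN (hamD x)).
rewrite (derivation_det_congruence (hamD x) (hamM x) (ham_Mmat x)).
by rewrite mxtrace_act_mx mulr0 mul0rn oppr0.
Qed.

End PoissonDerivation.

Lemma sum_nat_eq_mull (R : pzSemiRingType) (T : finType) (a : T) (F : T -> R) :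
  \sum_(j : T) (a == j)%:R * F j = F a.
Proof.
rewrite (bigD1 a) //= eqxx mul1r big1 ?addr0 // => j ja.
by rewrite eq_sym (negbTE ja) mul0r.
Qed.

Lemma sum_nat_eq_mulr (R : pzSemiRingType) (T : finType) (a : T) (F : T -> R) :
  \sum_(j : T) F j * (j == a)%:R = F a.
Proof.
rewrite (bigD1 a) //= eqxx mulr1 big1 ?addr0 // => j /negbTE ->.
by rewrite mulr0.
Qed.

Lemma meval_mderiv_det_id (K : comNzRingType) k n (v : 'I_k -> K)
    (A : 'M[{mpoly K[k]}]_n) j :
  map_mx (meval v) A = 1%:M ->
  (mderiv j (\det A)).@[v] = \sum_i (mderiv j (A i i)).@[v].
Proof.
move=> Av1; rewrite (derivation_det (mderivD j) (mderivM j)) raddf_sum.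
apply: eq_bigr => i _; rewrite raddf_sum /=.
under eq_bigr => l _ do rewrite mevalM -cofactor_map_mx Av1.
have cof1 l : cofactor (1%:M : 'M[K]_n) i l = (l == i)%:R.
  by have := congr1 (fun B : 'M[K]_n => B l i) (adj1 K n); rewrite !mxE.
by under eq_bigr => l _ do rewrite cof1; rewrite sum_nat_eq_mulr.
Qed.

Definition zdiag m (z : zidx m) : bool := (sval z).1 == (sval z).2.
Arguments zdiag {m} z : simpl never.

Lemma zdiag_zof m (a b : 'I_m) : zdiag (zof a b) = (a == b).
Proof. by rewrite /zdiag /=; case: leqP => _ //=; rewrite eq_sym. Qed.

Section Independence.
Variables (K : numFieldType) (m : nat).

Definition id_point (k : 'I_(gdim m)) : K :=
  match enum_val k with
  | Gz z => (zdiag z)%:R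
  | Gxm => - 2^-1
  | Gxp => 2^-1
  | _ => 0
  end.

Lemma Mmat_id_point : map_mx (meval id_point) (Mmat K m) = 1%:M.
Proof.
have h2 : (2%:R : K) != 0 by rewrite pnatr_eq0.
apply/matrixP => i j; rewrite !mxE; move: i j.
apply: Mmat_indexP => [a||]; apply: Mmat_indexP => [b||].
all: rewrite /row_xm /row_xp ?eq_lshift ?eq_rshift ?eq_lrshift ?eq_rlshift /=.
all: rewrite ?split_lshift ?split_rshift /= ?(rmorphN, rmorphM, rmorph_nat).
all: rewrite /X /id_point ?mevalXU ?enum_rankK /= ?oppr0 //.
- by rewrite zdiag_zof.
all: rewrite mevalXU enum_rankK /= ?oppr0 //.
- by rewrite mulrN opprK divff.
- by rewrite divff.
Qed.

Lemma mderiv_Cn_id_point_xp :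
  (mderiv (enum_rank Gxp) (Cn K m)).@[id_point] = - 2%:R.
Proof.
rewrite /Cn mderivN mevalN (meval_mderiv_det_id _ Mmat_id_point); congr (- _).
rewrite (bigD1 (row_xp m)) //= big1 => [|i ixp].
  rewrite mxE split_rshift /= mderivM (derivation_nat (mderivD _) (mderivM _)).
  by rewrite /X mderivXU eqxx mul0r add0r mulr1 addr0 rmorph_nat.
move: i ixp; apply: Mmat_indexP => [a||]; rewrite ?eqxx // => _.
all: rewrite mxE ?split_lshift ?split_rshift /= ?mderivN ?mderivM.
all: rewrite ?(derivation_nat (mderivD _) (mderivM _)) /X !mderivXU.
all: by rewrite (inj_eq enum_rank_inj) /= ?(mul0r, mulr0, add0r, oppr0, rmorph0).
Qed.

Lemma casimir_family_indep : func_indep (@casimir_family K m).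
Proof.
(* In a vanishing combination of the gradients, the x_+ coordinate kills the
   coefficient of C_n, and then the z_{i,j} coordinate kills that of z_{i,j}. *)
exists id_point; set J := jacobian _ id_point; apply/inj_row_free => u /rowP uJ.
set g := fun j => (mderiv j (Cn K m)).@[id_point].
have Jr r j : J r j =
    if enum_val r is Some z then (enum_rank (Gz z) == j)%:R else g j.
  by rewrite mxE; case: (enum_val r) => [z|] //=; rewrite /X mderivXU rmorph_nat.
pose rC : 'I_#|{: option (zidx m)}| := enum_rank None.
have uJE j : u 0 rC * g j + \sum_(r | r != rC) u 0 r * J r j = 0.
  by have := uJ j; rewrite !mxE (bigD1 rC) //= Jr enum_rankK.
have uC : u 0 rC = 0.
  have := uJE (enum_rank Gxp); rewrite big1 => [|r rrC].
    rewrite addr0 /g mderiv_Cn_id_point_xp => /eqP.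
    by rewrite mulrN oppr_eq0 mulf_eq0 pnatr_eq0 orbF => /eqP.
  rewrite Jr; case er: (enum_val r) => [z|].
    by rewrite (inj_eq enum_rank_inj) mulr0.
  by move: rrC; rewrite /rC -(enum_valK r) er eqxx.
apply/matrixP => i r; rewrite ord1 mxE.
case er: (enum_val r) => [z|]; last by rewrite -(enum_valK r) er.
have := uJE (enum_rank (Gz z)); rewrite uC mul0r add0r (bigD1 r) /=; last first.
  by rewrite /rC -(enum_valK r) er (inj_eq enum_rank_inj).
rewrite Jr er eqxx mulr1 big1 ?addr0 // => r' /andP[r'C r'r].
have [z' er'] : exists z', enum_val r' = Some z'.
  case er': (enum_val r') => [z'|]; first by exists z'.
  by move: r'C; rewrite /rC -(enum_valK r') er' eqxx.
rewrite Jr er' (inj_eq enum_rank_inj) (_ : (Gz z' == Gz z) = false) ?mulr0 //.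
apply: contraNF r'r => /eqP[zz].
by rewrite -(enum_valK r') -(enum_valK r) er' er zz.
Qed.
End Independence.

(* A nonsingular r x r compression L (A at v) R of the specialisation lifts to
   a compression of A whose determinant does not vanish at v. *)
Lemma mxrank_meval_le_frac (K : fieldType) k p q (A : 'M[{mpoly K[k]}]_(p, q))
    (v : 'I_k -> K) :
  (\rank (map_mx (meval v) A) <= \rank (map_mx (@FracField.tofrac _) A))%N.
Proof.
set Av := map_mx (meval v) A; set r := \rank Av.
have := mulmx_ebase Av; set CE := col_ebase Av; set RE := row_ebase Av => AvE.
pose L : 'M[K]_(r, p) := pid_mx r *m invmx CE.
pose R : 'M[K]_(q, r) := invmx RE *m pid_mx r.
have LAR1 : L *m Av *m R = 1%:M.
  rewrite /L /R -AvE !mulmxA (mulmxKV (col_ebase_unit _)).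
  rewrite (mulmxK (row_ebase_unit _)) pid_mx_id ?rank_leq_row //.
  by rewrite pid_mx_id ?rank_leq_col // pid_mx_1.
have mevalC_mx p' q' (B : 'M[K]_(p', q')) : map_mx (meval v) (map_mx (@mpolyC k K) B) = B.
  by apply/matrixP => i j; rewrite !mxE mevalC.
pose T := map_mx (@mpolyC k K) L *m A *m map_mx (@mpolyC k K) R.
have detT : \det T != 0.
  apply/eqP => /(congr1 (meval v)).
  by rewrite meval0 -det_map_mx /T !map_mxM !mevalC_mx LAR1 det1 => /eqP; rewrite oner_eq0.
have : map_mx (@FracField.tofrac _) T \in unitmx.
  by rewrite unitmxE det_map_mx unitfE tofrac_eq0.
move/mxrank_unit; rewrite /T !map_mxM => <-.
exact: leq_trans (mxrankM_maxl _ _) (mxrankM_maxr _ _).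
Qed.

Lemma mxrank_meval_mul0 (K : fieldType) k p q r (A : 'M[{mpoly K[k]}]_(p, q))
    (B : 'M_(q, r)) (v w : 'I_k -> K) :
  A *m B = 0 -> (\rank (map_mx (meval v) A) + \rank (map_mx (meval w) B) <= q)%N.
Proof.
move=> AB0.
have := mxrank_mul_min (map_mx (@FracField.tofrac _) A) (map_mx (@FracField.tofrac _) B).
rewrite -map_mxM AB0 map_mx0 mxrank0.
have := mxrank_meval_le_frac A v; have := mxrank_meval_le_frac B w.
lia.
Qed.

Section PoissonRank.
Variables (K : numFieldType) (m : nat).
Local Notation S := (Sg K m).

Definition poisson_mx : 'M[S]_(gdim m) := \matrix_(i, j) br K (enum_val i) (enum_val j).

Definition jacobian_mx (I : finType) (F : I -> S) : 'M[S]_(#|I|, gdim m) :=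
  \matrix_(i, j) mderiv j (F (enum_val i)).

Lemma jacobian_mx_meval (I : finType) (F : I -> S) v :
  jacobian F v = map_mx (meval v) (jacobian_mx F).
Proof. by apply/matrixP => i j; rewrite !mxE. Qed.

Lemma jacobian_mx_poisson (I : finType) (F : I -> S) :
  (forall i, casimir (F i)) -> jacobian_mx F *m poisson_mx = 0.
Proof.
move=> cF; apply/matrixP => i j; rewrite !mxE -[RHS](cF (enum_val i) (enum_val j)) pbrX.
rewrite (reindex (@enum_rank (gb m))) /=; last exact/onW_bij/enum_rank_bij.
by apply: eq_bigr => a _; rewrite !mxE enum_rankK.
Qed.

Definition noncentral := (bool + ('I_m + 'I_m))%type.

Definition noncentral_gb (s : noncentral) : gb m :=
  match s with
  | inl false => Gxm | inl true => Gxp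
  | inr (inl i) => Gym i | inr (inr i) => Gyp i
  end.

Definition bracket_dual (s : noncentral) : noncentral :=
  match s with
  | inl b => inl (~~ b)
  | inr (inl i) => inr (inr i) | inr (inr i) => inr (inl i)
  end.

Definition bracket_sign (s : noncentral) : K :=
  match s with inl true | inr (inr _) => 1 | _ => -1 end.

Definition pairing_point (k : 'I_(gdim m)) : K :=
  match enum_val k with
  | Gz z => (zdiag z)%:R
  | Gh => 1
  | _ => 0
  end.

Lemma br_dual_pairing_point s t :
  (br K (noncentral_gb s) (noncentral_gb (bracket_dual t))).@[pairing_point]
    * bracket_sign t = (s == t)%:R.
Proof.
case: s => [[]|[i|i]]; case: t => [[]|[j|j]] /=.
all: rewrite ?meval0 ?mul0r // ?mevalN /X /pairing_point ?mevalXU ?enum_rankK /=.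
all: rewrite ?mulr1 ?mulrN1 ?opprK ?oppr0 //.
all: by rewrite zdiag_zof (inj_eq inr_inj) ?(inj_eq inl_inj) ?(inj_eq inr_inj) // eq_sym.
Qed.

Lemma poisson_mx_rank :
  (#|{: noncentral}| <= \rank (map_mx (meval pairing_point) poisson_mx))%N.
Proof.
pose L : 'M[K]_(#|{: noncentral}|, gdim m) :=
  \matrix_(i, j) (enum_val j == noncentral_gb (enum_val i))%:R.
pose R : 'M[K]_(gdim m, #|{: noncentral}|) := \matrix_(j, k)
  ((enum_val j == noncentral_gb (bracket_dual (enum_val k)))%:R * bracket_sign (enum_val k)).
have sel (T : finType) (e : T) (G : 'I_#|T| -> K) :
    \sum_j (enum_val j == e)%:R * G j = G (enum_rank e).
  under eq_bigr => j _ do rewrite -{1}(enum_rankK e) (inj_eq enum_val_inj) eq_sym.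
  exact: sum_nat_eq_mull.
have LP i j : (L *m map_mx (meval pairing_point) poisson_mx) i j =
    (br K (noncentral_gb (enum_val i)) (enum_val j)).@[pairing_point].
  by rewrite mxE; under eq_bigr => l _ do rewrite !mxE; rewrite sel enum_rankK.
have LPR1 : L *m map_mx (meval pairing_point) poisson_mx *m R = 1%:M.
  apply/matrixP => i k; rewrite mxE.
  under eq_bigr => j _ do rewrite LP mxE mulrCA.
  by rewrite sel enum_rankK br_dual_pairing_point !mxE (inj_eq enum_val_inj).
rewrite -{1}(mxrank1 K #|{: noncentral}|) -LPR1.
exact: leq_trans (mxrankM_maxl _ _) (mxrankM_maxr _ _).
Qed.

Lemma casimir_jacobian_rank (I : finType) (F : I -> S) v :
  (forall i, casimir (F i)) -> (\rank (jacobian F v) + #|{: noncentral}| <= gdim m)%N.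
Proof.
move=> casF; rewrite jacobian_mx_meval.
apply: leq_trans (leq_add (leqnn _) poisson_mx_rank) _.
exact/mxrank_meval_mul0/jacobian_mx_poisson.
Qed.

End PoissonRank.

Lemma card_gb m : #|{: gb m}| = (3 + (m + m) + #|{: zidx m}|)%N.
Proof.
have gb_encI : bijective (@gb_enc m).
  by exists (@gb_dec m) => [|[[[[[]|[]]|[]]|[i|i]]|z]]; first exact: gb_encK.
by rewrite (bij_eq_card gb_encI) !card_sum !card_unit !card_ord.
Qed.

Lemma card_noncentral m : #|{: noncentral m}| = (2 + (m + m))%N.
Proof. by rewrite !card_sum card_bool !card_ord. Qed.

Unset Implicit Arguments.
Set Strict Implicit.
Theorem theorem4p3 (K : numFieldType) (n : nat) (hn : (2 <= n)%N) :
  let m := (n - 2)%N in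
  (* the z_{i,j} and C_n are Casimir elements *)
  (forall z : zidx m, casimir (X K (Gz z))) /\ casimir (Cn K m) /\
  (* they are functionally independent *)
  func_indep (@casimir_family K m) /\
  (* and every Casimir element is functionally dependent on them *)
  (forall C : Sg K m, casimir C -> ~ func_indep (extend_family C)).
Proof.
move=> m; split; first exact: casimir_z.
split; first exact: casimir_Cn.
split; first exact: casimir_family_indep.
move=> C casC [v rowfree].
have casF o : casimir (extend_family C o).
  by case: o => [[z|]|]; [exact: casimir_z | exact: casimir_Cn | exact: casC].
have := casimir_jacobian_rank v casF.
have cardF : #|{: option (option (zidx m))}| = (#|{: zidx m}| + 2)%N.
  by rewrite !card_option addn2.
by rewrite (eqP rowfree) cardF card_noncentral /gdim card_gb; lia.
Qed.
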